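(* Let $p\in S_m$ avoid the pattern $321$. Then for every $n\ge 2$ there are only finitely many $\omega\in\widetilde{S}_n$ that avoid $p$.
   Context: For $n\ge 2$, the affine symmetric group $\widetilde{S}_n$ is the set of bijections $\omega:\mathbb{Z}\to\mathbb{Z}$ such that $\omega(i+n)=\omega(i)+n$ for all $i\in\mathbb{Z}$ and $\sum_{i=1}^n\omega(i)=\binom{n+1}{2}$; write $\omega_i=\omega(i)$. For $p\in S_k$, $\omega$ contains $p$ if there exist integers $i_1<\cdots<i_k$ such that $\omega_{i_1}\cdots\omega_{i_k}$ has the same relative order as $p_1\cdots p_k$; otherwise $\omega$ avoids $p$. Containment between ordinary permutations is defined the same way. *)

From mathcomp Require Import all_boot all_order all_algebra all_fingroup.
Set Implicit Arguments. Unset Strict Implicit. Unset Printing Implicit Defensive.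
Import Order.TTheory GRing.Theory Num.Theory.
Local Open Scope ring_scope.

Definition is_affine_perm (n : nat) (omega : int -> int) : Prop :=
  bijective omega /\
  (forall i : int, omega (i + n%:Z) = omega i + n%:Z) /\
  \sum_(i < n) omega (i.+1)%:Z = ('C(n.+1, 2))%:Z.

Definition aff_contains (k : nat) (p : 'S_k) (omega : int -> int) : Prop :=
  exists f : 'I_k -> int,
    (forall a b : 'I_k, (a < b)%N -> f a < f b) /\
    (forall a b : 'I_k, (omega (f a) < omega (f b)) = (p a < p b)%N).

Definition aff_avoids (k : nat) (p : 'S_k) (omega : int -> int) : Prop :=
  ~ aff_contains p omega.

Definition avoids321 (m : nat) (p : 'S_m) : Prop :=
  ~ exists a b c : 'I_m, [/\ (a < b)%N, (b < c)%N, (p b < p a)%N & (p c < p b)%N].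

From mathcomp Require Import all_boot all_order all_algebra all_fingroup zify.
Set Implicit Arguments. Unset Strict Implicit. Unset Printing Implicit Defensive.
Import Order.TTheory GRing.Theory Num.Theory.
Local Open Scope ring_scope.

(* A 321-avoiding [p] is the union of its left-to-right maxima and the remaining entries,
   each of which lies below every later entry.  If two residues [r], [s] of an affine
   permutation [w] have displacements [w r - r] and [w s - s] differing by at least
   [(n+1) 3^m], then [w] contains [p]: put the maxima in the residue class of [r] and the
   other entries in that of [s], choosing positions greedily from left to right; the large
   gap lets each maximum stay above the [s]-entries that must lie below it.  So an avoider
   has bounded displacement differences; as the displacements over a window sum to zero,
   the displacements themselves are bounded, and they determine [w]. *)

Section Periodic.
Variables (n : nat) (w : int -> int).
Hypothesis w_periodic : forall i : int, w (i + n%:Z) = w i + n%:Z.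

Lemma periodicZ (r q : int) : w (r + q * n%:Z) = w r + q * n%:Z.
Proof.
have shiftN r' k : w (r' + k%:Z * n%:Z) = w r' + k%:Z * n%:Z.
  elim: k => [|k IHk]; first by rewrite !mul0r !addr0.
  have -> : r' + k.+1%:Z * n%:Z = (r' + k%:Z * n%:Z) + n%:Z by lia.
  by rewrite w_periodic IHk; lia.
case: q => k; first exact: shiftN.
have := shiftN (r + Negz k * n%:Z) k.+1.
have -> : r + Negz k * n%:Z + k.+1%:Z * n%:Z = r by rewrite NegzE; lia.
lia.
Qed.

Lemma periodic_window (i : int) :
  w i = i + (w (i %% n%:Z)%Z - (i %% n%:Z)%Z).
Proof.
have := periodicZ (i %% n%:Z)%Z (i %/ n%:Z)%Z.
rewrite addrC -divz_eq.
have := divz_eq i n%:Z; lia.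
Qed.

Lemma periodic_residue_above (n_gt0 : (0 < n)%N) (s B : int) :
  exists x, [/\ B < x, x <= B + n%:Z & w x = x + (w s - s)].
Proof.
have n_neq0 : n%:Z != 0 by rewrite eqz_nat -lt0n.
have mod_ge0 := modz_ge0 (B - s) n_neq0.
have mod_lt : ((B - s) %% n%:Z)%Z < n%:Z by rewrite ltz_pmod // ltz_nat.
have Bs_eq := divz_eq (B - s) n%:Z.
exists (s + (((B - s) %/ n%:Z)%Z + 1) * n%:Z).
by rewrite periodicZ; split; lia.
Qed.

End Periodic.

Section LeftToRightMaxima.
Variables (m : nat) (p : 'S_m).

(* [p] extended by [0] outside ['I_m], so that positions can be handled as naturals. *)
Definition pval (a : nat) : nat := odflt 0%N (omap (fun i : 'I_m => val (p i)) (insub a)).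

Definition lr_max (a : nat) : bool := all (fun b => pval b < pval a)%N (iota 0 a).

Lemma pval_ord (i : 'I_m) : pval i = p i.
Proof. by rewrite /pval valK. Qed.

Lemma pval_inj a b : (a < m)%N -> (b < m)%N -> pval a = pval b -> a = b.
Proof.
move=> a_lt b_lt; rewrite -[a]/(val (Ordinal a_lt)) -[b]/(val (Ordinal b_lt)) !pval_ord.
by move/val_inj/perm_inj->.
Qed.

Lemma lr_max_lt a b : lr_max a -> (b < a)%N -> (pval b < pval a)%N.
Proof. by move/allP=> max_a b_lt; apply: max_a; rewrite mem_iota. Qed.

Lemma lr_max_mono a b :
  lr_max a -> lr_max b -> (pval a < pval b)%N -> (a < b)%N.
Proof.
move=> max_a max_b lt_ab; case: (ltngtP a b) => // [lt_ba|eq_ab].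
  by have := lr_max_lt max_a lt_ba; rewrite ltnNge ltnW.
by rewrite eq_ab ltnn in lt_ab.
Qed.

Lemma non_lr_maxP a : (a < m)%N -> ~~ lr_max a ->
  exists2 e, (e < a)%N & (pval a < pval e)%N.
Proof.
move=> a_lt /allPn[e]; rewrite mem_iota add0n /= => e_lt.
rewrite -leqNgt leq_eqVlt => /predU1P[pe_pa|]; last by exists e.
have eq_ea := pval_inj (ltn_trans e_lt a_lt) a_lt (esym pe_pa).
by rewrite eq_ea ltnn in e_lt.
Qed.

(* An earlier entry above [d], together with [d] and [t], would form a 321. *)
Lemma avoids321_non_lr_max_lt (p_avoids : avoids321 p) d t :
  (d < t)%N -> (t < m)%N -> ~~ lr_max d -> (pval d < pval t)%N.
Proof.
move=> lt_dt t_lt non_max_d; have d_lt := ltn_trans lt_dt t_lt.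
have [e lt_ed lt_de] := non_lr_maxP d_lt non_max_d.
case: (ltngtP (pval d) (pval t)) => // [lt_td|eq_dt]; last first.
  by rewrite (pval_inj d_lt t_lt eq_dt) ltnn in lt_dt.
case: p_avoids; exists (Ordinal (ltn_trans lt_ed d_lt)), (Ordinal d_lt), (Ordinal t_lt).
by rewrite -!pval_ord.
Qed.

End LeftToRightMaxima.

Lemma lt_sides_agree (x y : int) (c e : nat) :
  (x < y /\ (c < e)%N) \/ (y < x /\ (e < c)%N) ->
  (x < y) = (c < e)%N /\ (y < x) = (e < c)%N.
Proof.
by case=> -[lt_xy lt_ce]; rewrite lt_xy lt_ce (lt_gtF lt_xy) ltnNge (ltnW lt_ce).
Qed.

Definition margin (n m t : nat) : nat := n.+1 * 3 ^ (m - t).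

Lemma margin_facts n m t : (t < m)%N ->
  [/\ margin n m t = 3 * margin n m t.+1, n.+1 <= margin n m t.+1
    & margin n m t.+1 <= margin n m 0]%N.
Proof.
move=> t_lt; rewrite /margin; split.
- by rewrite -(subnSK t_lt) expnS mulnCA.
- by rewrite -{1}[n.+1]muln1 leq_mul2l expn_gt0.
- by rewrite leq_mul2l leq_pexp2l // subn0 leq_subr.
Qed.

Section Embedding.
Variables (n m : nat) (p : 'S_m) (w : int -> int) (r s : int).
Hypothesis n_gt0 : (0 < n)%N.
Hypothesis w_periodic : forall i : int, w (i + n%:Z) = w i + n%:Z.
Hypothesis gap_large : (margin n m 0)%:Z <= (w r - r) - (w s - s).
Hypothesis p_avoids : avoids321 p.

Local Notation g := ((w r - r) - (w s - s)).
Local Notation M t := (margin n m t)%:Z.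

(* The last two fields keep room,
   shrinking by a factor 3 at each step, for the entries still to be placed. *)
Record prefix_embedding (t : nat) (X : nat -> int) : Prop := {
  emb_incr : forall a b, (a < b)%N -> (b < t)%N -> X a < X b;
  emb_pattern : forall a b, (a < t)%N -> (b < t)%N ->
    (w (X a) < w (X b)) = (pval p a < pval p b)%N;
  emb_disp : forall a, (a < t)%N ->
    w (X a) = X a + (if lr_max p a then w r - r else w s - s);
  emb_gap : forall a b, (a < b)%N -> (b < t)%N -> lr_max p a -> lr_max p b ->
    X a + M t <= X b;
  emb_reach : forall a, (a < t)%N -> lr_max p a ->
    (forall d, (d < t)%N -> ~~ lr_max p d -> (pval p d < pval p a)%N) ->
    X t.-1 + M t <= X a + g }.

Lemma emb_le_last t X : prefix_embedding t X -> forall a, (a < t)%N -> X a <= X t.-1.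
Proof.
move=> emb a a_lt; case: (ltnP a t.-1) => [lt_a_last|ge_a_last].
  by apply/ltW/(emb_incr emb lt_a_last); lia.
by have -> : a = t.-1 by lia.
Qed.

Lemma embedding_extend t X x : (t < m)%N -> prefix_embedding t X ->
  (forall b, (b < t)%N -> X b < x) ->
  (forall b, (b < t)%N -> (w (X b) < w x /\ (pval p b < pval p t)%N) \/
                        (w x < w (X b) /\ (pval p t < pval p b)%N)) ->
  w x = x + (if lr_max p t then w r - r else w s - s) ->
  (lr_max p t -> forall a, (a < t)%N -> lr_max p a -> X a + M t.+1 <= x) ->
  (forall a, (a < t)%N -> lr_max p a ->
     (forall d, (d <= t)%N -> ~~ lr_max p d -> (pval p d < pval p a)%N) ->
     x + M t.+1 <= X a + g) ->
  prefix_embedding t.+1 (fun a => if a == t then x else X a).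
Proof.
move=> t_lt emb above sides disp_x gap_x reach_x.
have [M_eq _ M_le] := margin_facts n t_lt.
have old a : (a < t)%N -> (if a == t then x else X a) = X a by move/ltn_eqF->.
split=> [a b lt_ab||a|a b lt_ab|a /=].
- rewrite ltnS leq_eqVlt => /predU1P[eq_bt|b_lt].
    by subst b; rewrite eqxx old //; apply: above.
  by rewrite !old ?(ltn_trans lt_ab) //; apply: (emb_incr emb).
- move=> a b; rewrite ltnS leq_eqVlt => /predU1P[->|a_lt];
    rewrite ltnS leq_eqVlt => /predU1P[->|b_lt].
  + by rewrite eqxx ltxx ltnn.
  + by rewrite eqxx old //; case: (lt_sides_agree (sides b b_lt)).
  + by rewrite eqxx old //; case: (lt_sides_agree (sides a a_lt)).
  + by rewrite !old //; apply: (emb_pattern emb).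
- rewrite ltnS leq_eqVlt => /predU1P[->|a_lt]; first by rewrite eqxx.
  by rewrite old //; apply: (emb_disp emb).
- rewrite ltnS leq_eqVlt => /predU1P[eq_bt|b_lt] max_a max_b.
    by subst b; rewrite eqxx old //; apply: gap_x.
  rewrite !old ?(ltn_trans lt_ab) //.
  apply: le_trans (emb_gap emb lt_ab b_lt max_a max_b).
  by rewrite lerD2l lez_nat M_eq leq_pmull.
- rewrite eqxx ltnS leq_eqVlt => /predU1P[->|a_lt] max_a below_a.
    by rewrite eqxx lerD2l (le_trans _ gap_large) // lez_nat.
  by rewrite old //; apply: reach_x => // d d_le; apply: below_a.
Qed.

Lemma embedding_step_lr_max t X : (t < m)%N -> lr_max p t ->
  prefix_embedding t X -> exists Y, prefix_embedding t.+1 Y.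
Proof.
move=> t_lt max_t emb; have [M_eq M_ge _] := margin_facts n t_lt.
have [x [lt_x x_le disp_x]] :=
  periodic_residue_above w_periodic n_gt0 r (X t.-1 + M t.+1 - 1).
have le_last := emb_le_last emb.
have above b : (b < t)%N -> X b < x by move/le_last; lia.
exists (fun a => if a == t then x else X a); apply: embedding_extend => //.
- move=> b b_lt; left; split; last exact: lr_max_lt max_t b_lt.
  have g_ge0 : 0 <= g by apply: le_trans gap_large.
  have := above b b_lt.
  by rewrite (emb_disp emb) // disp_x; case: ifP => _; lia.
- by rewrite max_t.
- by move=> _ a /le_last; lia.
- move=> a a_lt max_a below_a.
  have := emb_reach emb a_lt max_a (fun d d_lt => below_a d (ltnW d_lt)).
  by move: M_eq M_ge x_le; clear; lia.
Qed.

Lemma embedding_step_non_lr_max t X : (t < m)%N -> ~~ lr_max p t ->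
  prefix_embedding t X -> exists Y, prefix_embedding t.+1 Y.
Proof.
move=> t_lt non_max_t emb; have [M_eq M_ge _] := margin_facts n t_lt.
have g_ge0 : 0 <= g by apply: le_trans gap_large.
have t_gt0 : (0 < t)%N by case: t non_max_t {t_lt emb M_eq M_ge}.
have le_last := emb_le_last emb.
pose below_t b := lr_max p b && (pval p b < pval p t)%N.
pose B := \big[Order.max/X 0%N]_(0 <= b < t) (if below_t b then X b + g else X b).
have le_B b : (b < t)%N -> (if below_t b then X b + g else X b) <= B.
  by move=> b_lt; apply: le_bigmax_seq; rewrite ?mem_index_iota.
have [x [lt_x x_le disp_x]] := periodic_residue_above w_periodic n_gt0 s B.
have B_le u : (u < t)%N -> lr_max p u -> (pval p t < pval p u)%N -> B + M t <= X u + g.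
  move=> u_lt max_u lt_tu.
  have reach_u := emb_reach emb u_lt max_u (fun d d_lt non_max_d =>
    ltn_trans (avoids321_non_lr_max_lt p_avoids d_lt t_lt non_max_d) lt_tu).
  rewrite -lerBrDr /B big_seq; apply: bigmax_le => [|b].
    by have := le_last 0%N t_gt0; lia.
  rewrite mem_index_iota /= => b_lt; rewrite /below_t.
  case: ifP => [/andP[max_b lt_bt]|_]; last by have := le_last b b_lt; lia.
  have lt_bu := lr_max_mono max_b max_u (ltn_trans lt_bt lt_tu).
  by have := emb_gap emb lt_bu u_lt max_b max_u; lia.
exists (fun a => if a == t then x else X a); apply: embedding_extend => //.
- by move=> b /le_B; case: ifP => _; lia.
- move=> b b_lt; have b_lt_m := ltn_trans b_lt t_lt.
  have := le_B b b_lt; rewrite (emb_disp emb) // disp_x /below_t.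
  case: (boolP (lr_max p b)) => [max_b|non_max_b] /=.
  + case: (ltngtP (pval p b) (pval p t)) => [lt_bt|lt_tb|eq_bt] le_b.
    * by left; split=> //; lia.
    * by right; split=> //; have := B_le b b_lt max_b lt_tb; lia.
    * by rewrite (pval_inj b_lt_m t_lt eq_bt) ltnn in b_lt.
  + by left; split; [lia | apply: avoids321_non_lr_max_lt].
- by rewrite (negbTE non_max_t).
- by move=> max_t; rewrite max_t in non_max_t.
- move=> a a_lt max_a below_a.
  by have := B_le a a_lt max_a (below_a t (leqnn t) non_max_t); lia.
Qed.

Lemma exists_prefix_embedding t : (t <= m)%N -> exists X, prefix_embedding t X.
Proof.
elim: t => [|t IHt] t_le; first by exists (fun=> 0); split.
have [X emb] := IHt (ltnW t_le).
by case: (boolP (lr_max p t)) => [max_t|non_max_t];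
  [apply: embedding_step_lr_max emb | apply: embedding_step_non_lr_max emb].
Qed.

Lemma contains_of_large_gap : aff_contains p w.
Proof.
have [X emb] := exists_prefix_embedding (leqnn m).
exists (fun i => X i); split=> [a b lt_ab|a b]; first exact: (emb_incr emb).
by rewrite (emb_pattern emb) // !pval_ord.
Qed.

End Embedding.

Lemma avoider_gap_lt n m (p : 'S_m) (w : int -> int) : (0 < n)%N ->
  (forall i : int, w (i + n%:Z) = w i + n%:Z) -> avoids321 p -> aff_avoids p w ->
  forall r s, (w r - r) - (w s - s) < (margin n m 0)%:Z.
Proof.
move=> n_gt0 w_periodic p_avoids w_avoids r s; rewrite ltNge; apply/negP => gap_large.
exact/w_avoids/(contains_of_large_gap n_gt0 w_periodic gap_large).
Qed.

Lemma sum_eq0_ge0 (R : realDomainType) n (F : nat -> R) : (0 < n)%N ->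
  \sum_(0 <= i < n) F i = 0 -> exists i, 0 <= F i.
Proof.
move=> n_gt0 sum0.
have [/hasP[i _ Fi]|/hasPn F_lt0] := boolP (has (fun i => 0 <= F i) (index_iota 0 n)).
  by exists i.
have F_neg i : (0 <= i < n)%N -> F i < 0.
  by rewrite -mem_index_iota => /F_lt0; rewrite ltNge.
by have := ltr_sum_nat n_gt0 F_neg; rewrite sum0 big1_eq ltxx.
Qed.

Lemma sum_succ_bin2 n : \sum_(i < n) i.+1%:Z = 'C(n.+1, 2)%:Z.
Proof.
rewrite -(big_morph Posz PoszD (erefl 0%:Z)) -bin2_sum big_mkord big_ord_recl add0n.
by congr Posz; apply: eq_bigr => i _; rewrite /bump add1n.
Qed.

Lemma affine_perm_disp_sign n w : (0 < n)%N -> is_affine_perm n w ->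
  (exists r, 0 <= w r - r) /\ (exists s, w s - s <= 0).
Proof.
move=> n_gt0 [_ [_ w_sum]].
have disp_sum0 : \sum_(0 <= i < n) (w i.+1%:Z - i.+1%:Z) = 0.
  by rewrite big_mkord sumrB w_sum sum_succ_bin2 subrr.
have [i disp_i] := sum_eq0_ge0 n_gt0 disp_sum0.
have [j disp_j] : exists j, 0 <= - (w j.+1%:Z - j.+1%:Z).
  by apply: sum_eq0_ge0 n_gt0 _; rewrite sumrN disp_sum0 oppr0.
by split; [exists i.+1%:Z | exists j.+1%:Z; rewrite -oppr_ge0].
Qed.

Lemma avoider_disp_bounded n m (p : 'S_m) w : (0 < n)%N -> is_affine_perm n w ->
  avoids321 p -> aff_avoids p w ->
  forall z, - (margin n m 0)%:Z < w z - z < (margin n m 0)%:Z.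
Proof.
move=> n_gt0 w_aff p_avoids w_avoids z; have [_ [w_periodic _]] := w_aff.
have [[r disp_r] [s disp_s]] := affine_perm_disp_sign n_gt0 w_aff.
have gap_lt := avoider_gap_lt n_gt0 w_periodic p_avoids w_avoids.
by have := gap_lt r z; have := gap_lt z s; lia.
Qed.

(* Displacements on the window [0, n) are stored shifted up by [B], as naturals. *)
Definition map_of_window_disp (n B : nat) (v : seq nat) (z : int) : int :=
  z + (nth 0%N v (absz (z %% n%:Z)%Z))%:Z - B%:Z.

Lemma eq_map_of_window_disp n B w : (0 < n)%N ->
  (forall i : int, w (i + n%:Z) = w i + n%:Z) -> (forall z, - B%:Z < w z - z) ->
  w =1 map_of_window_disp n B [seq absz (w k%:Z - k%:Z + B%:Z) | k <- iota 0 n].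
Proof.
move=> n_gt0 w_periodic disp_gt z.
rewrite (periodic_window w_periodic) /map_of_window_disp.
have n_neq0 : n%:Z != 0 by rewrite eqz_nat -lt0n.
have mod_ge0 := modz_ge0 z n_neq0.
have mod_lt : (z %% n%:Z)%Z < n%:Z by rewrite ltz_pmod // ltz_nat.
rewrite (nth_map 0%N) ?size_iota; last by lia.
rewrite nth_iota ?add0n; last by lia.
have -> : (absz (z %% n%:Z)%Z)%:Z = (z %% n%:Z)%Z by lia.
by have := disp_gt (z %% n%:Z)%Z; lia.
Qed.

Fixpoint bounded_seqs (K k : nat) : seq (seq nat) :=
  if k is k'.+1 then [seq x :: v | x <- iota 0 K, v <- bounded_seqs K k'] else [:: [::]].

Lemma mem_bounded_seqs K k (v : seq nat) :
  size v = k -> all (fun x => x < K)%N v -> v \in bounded_seqs K k.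
Proof.
elim: k v => [|k IHk] [|x v] //= [size_v] /andP[x_lt v_lt].
by apply: allpairs_f; [rewrite mem_iota | apply: IHk].
Qed.

Theorem proposition3p3 (m : nat) (p : 'S_m) (Hp : avoids321 p) (n : nat) (Hn : (2 <= n)%N) :
  exists L : seq (int -> int),
    forall omega : int -> int,
      is_affine_perm n omega -> aff_avoids p omega ->
      exists2 j : nat, (j < size L)%N & (forall i : int, omega i = nth id L j i).
Proof.
have n_gt0 : (0 < n)%N := ltnW Hn.
pose B := margin n m 0.
exists (map (map_of_window_disp n B) (bounded_seqs (B + B) n)) => w w_aff w_avoids.
have [_ [w_periodic _]] := w_aff.
have disp_bounded := avoider_disp_bounded n_gt0 w_aff Hp w_avoids.
pose v := [seq absz (w k%:Z - k%:Z + B%:Z) | k <- iota 0 n].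
have v_in : v \in bounded_seqs (B + B) n.
  apply: mem_bounded_seqs; first by rewrite size_map size_iota.
  by apply/allP => _ /mapP[k _ ->]; have := disp_bounded k; lia.
exists (index v (bounded_seqs (B + B) n)); first by rewrite size_map index_mem.
rewrite (nth_map [::]) ?index_mem // nth_index //.
by apply: eq_map_of_window_disp => // z; have := disp_bounded z; lia.
Qed.
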